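(* Every instance of the axiom schema (K1) $\Box(\alpha\to\beta)\to(\Diamond\alpha\to\Diamond\beta)$ is derivable in ${\bf Tmd}$.
   Context: Formulas are built from a denumerable set of propositional variables by the unary connectives $\neg$, $\Box$ and the binary connective $\to$; $For$ is the set of all formulas; $\Diamond\alpha:=\neg\Box\neg\alpha$. ${\bf Tmd}$ is the Hilbert calculus whose axioms are all instances (over $For$) of the axiom schemas of a standard Hilbert calculus for classical propositional logic in the signature $\{\neg,\to\}$, plus all instances of: (K) $\Box(\alpha\to\beta)\to(\Box\alpha\to\Box\beta)$; (Kdet) $\Box(\alpha\to\beta)\to(\Diamond\alpha\to\Box\beta)$; (K2) $\Diamond(\alpha\to\beta)\to(\Box\alpha\to\Diamond\beta)$; (M1) $\neg\Diamond\alpha\to\Box(\alpha\to\beta)$; (M2) $\Box\beta\to\Box(\alpha\to\beta)$; (M3) $\Diamond\beta\to\Diamond(\alpha\to\beta)$; (M4) $\Diamond\neg\alpha\to\Diamond(\alpha\to\beta)$; (T) $\Box\alpha\to\alpha$; (DN1) $\Box\alpha\to\Box\neg\neg\alpha$; (DN2) $\Box\neg\neg\alpha\to\Box\alpha$; modus ponens is the only inference rule. *)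

From Stdlib Require Import Arith.

Inductive form : Type :=
| Var : nat -> form
| Neg : form -> form
| Box : form -> form
| Imp : form -> form -> form.

Definition Dia (a : form) : form := Neg (Box (Neg a)).

(* Axioms of Tmd.  Classical propositional part: the standard
   Lukasiewicz axiomatization in the signature {~, ->}. *)
Inductive TmdAxiom : form -> Prop :=
| Ax_CPL1 : forall a b, TmdAxiom (Imp a (Imp b a))
| Ax_CPL2 : forall a b c,
    TmdAxiom (Imp (Imp a (Imp b c)) (Imp (Imp a b) (Imp a c)))
| Ax_CPL3 : forall a b,
    TmdAxiom (Imp (Imp (Neg a) (Neg b)) (Imp b a))
| Ax_K : forall a b,
    TmdAxiom (Imp (Box (Imp a b)) (Imp (Box a) (Box b)))
| Ax_Kdet : forall a b,
    TmdAxiom (Imp (Box (Imp a b)) (Imp (Dia a) (Box b)))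
| Ax_K2 : forall a b,
    TmdAxiom (Imp (Dia (Imp a b)) (Imp (Box a) (Dia b)))
| Ax_M1 : forall a b,
    TmdAxiom (Imp (Neg (Dia a)) (Box (Imp a b)))
| Ax_M2 : forall a b,
    TmdAxiom (Imp (Box b) (Box (Imp a b)))
| Ax_M3 : forall a b,
    TmdAxiom (Imp (Dia b) (Dia (Imp a b)))
| Ax_M4 : forall a b,
    TmdAxiom (Imp (Dia (Neg a)) (Dia (Imp a b)))
| Ax_T : forall a,
    TmdAxiom (Imp (Box a) a)
| Ax_DN1 : forall a,
    TmdAxiom (Imp (Box a) (Box (Neg (Neg a))))
| Ax_DN2 : forall a,
    TmdAxiom (Imp (Box (Neg (Neg a))) (Box a)).

Inductive Tmd_derivable : form -> Prop :=
| D_ax : forall a, TmdAxiom a -> Tmd_derivable a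
| D_mp : forall a b, Tmd_derivable (Imp a b) -> Tmd_derivable a -> Tmd_derivable b.

(* From Box (a -> b) and Dia a, axiom Kdet yields Box b and T yields b.
   T also gives Box ~b -> ~b, so modus tollens yields ~ Box ~b, i.e. Dia b.
   The derivation is carried out under these two hypotheses and discharged by
   the deduction theorem, which holds because CPL1 and CPL2 are axioms and
   modus ponens is the only rule. *)
From Stdlib Require Import List.

Inductive derives (G : list form) : form -> Prop :=
| derives_ax : forall a, TmdAxiom a -> derives G a
| derives_hyp : forall a, In a G -> derives G a
| derives_mp : forall a b, derives G (Imp a b) -> derives G a -> derives G b.

Lemma derives_nil_Tmd a : derives nil a -> Tmd_derivable a.
Proof.
  induction 1 as [c Hc | c [] | c d _ IHcd _ IHc].
  - now apply D_ax.
  - now apply D_mp with c.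
Qed.

Lemma derives_weaken G G' a : incl G G' -> derives G a -> derives G' a.
Proof.
  intros HGG'. induction 1.
  - now apply derives_ax.
  - now apply derives_hyp, HGG'.
  - now apply derives_mp with a.
Qed.

Lemma derives_imp_refl G a : derives G (Imp a a).
Proof.
  apply derives_mp with (Imp a (Imp a a)).
  - apply derives_mp with (Imp a (Imp (Imp a a) a)).
    + apply derives_ax, Ax_CPL2.
    + apply derives_ax, Ax_CPL1.
  - apply derives_ax, Ax_CPL1.
Qed.

Lemma derives_deduction G a b : derives (a :: G) b -> derives G (Imp a b).
Proof.
  induction 1 as [c Hc | c [<- | Hc] | c d _ IHcd _ IHc].
  - apply derives_mp with c; [apply derives_ax, Ax_CPL1 | now apply derives_ax].
  - apply derives_imp_refl.
  - apply derives_mp with c; [apply derives_ax, Ax_CPL1 | now apply derives_hyp].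
  - apply derives_mp with (Imp a c); [|exact IHc].
    apply derives_mp with (Imp a (Imp c d)); [apply derives_ax, Ax_CPL2 | exact IHcd].
Qed.

Lemma derives_dne G a : derives G (Imp (Neg (Neg a)) a).
Proof.
  apply derives_deduction.
  assert (Hnna : derives (Neg (Neg a) :: G) (Neg (Neg a))) by (apply derives_hyp; now left).
  apply derives_mp with (Neg (Neg a)); [|exact Hnna].
  apply derives_mp with (Imp (Neg a) (Neg (Neg (Neg a)))); [apply derives_ax, Ax_CPL3|].
  apply derives_mp with (Imp (Neg (Neg (Neg (Neg a)))) (Neg (Neg a))).
  - apply derives_ax, Ax_CPL3.
  - apply derives_mp with (Neg (Neg a)); [apply derives_ax, Ax_CPL1 | exact Hnna].
Qed.

Lemma derives_modus_tollens G a b :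
  derives G (Imp a (Neg b)) -> derives G b -> derives G (Neg a).
Proof.
  intros Hab Hb.
  assert (Hnnab : derives G (Imp (Neg (Neg a)) (Neg b))).
  { apply derives_deduction.
    apply derives_mp with a.
    - apply (derives_weaken G); [intros c Hc; now right | exact Hab].
    - apply derives_mp with (Neg (Neg a)); [apply derives_dne | apply derives_hyp; now left]. }
  apply derives_mp with b; [|exact Hb].
  apply derives_mp with (Imp (Neg (Neg a)) (Neg b)); [apply derives_ax, Ax_CPL3 | exact Hnnab].
Qed.

Theorem mainTheorem12 : forall a b : form,
  Tmd_derivable (Imp (Box (Imp a b)) (Imp (Dia a) (Dia b))).
Proof.
  intros a b.
  apply derives_nil_Tmd, derives_deduction, derives_deduction.
  set (G := Dia a :: Box (Imp a b) :: nil).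
  assert (Hbox_b : derives G (Box b)).
  { apply derives_mp with (Dia a); [|apply derives_hyp; simpl; auto].
    apply derives_mp with (Box (Imp a b)); [apply derives_ax, Ax_Kdet|].
    apply derives_hyp; simpl; auto. }
  assert (Hb : derives G b).
  { apply derives_mp with (Box b); [apply derives_ax, Ax_T | exact Hbox_b]. }
  apply derives_modus_tollens with b; [apply derives_ax, Ax_T | exact Hb].
Qed.
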